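(* Let $A_1,A_2\subset\mathbb{Z}^2$ be finite with $|A_1|,|A_2|\ge2$ and $\mathbb{Z}A_1+\mathbb{Z}A_2=\mathbb{Z}^2$, and let $f=\bigoplus_{i\in A_1}p^1_i\odot w^i$, $g=\bigoplus_{i\in A_2}p^2_i\odot w^i$ be tropical polynomials with supports $A_1,A_2$. Let $q=(q_1,q_2)\in\mathcal{T}(f)\cap\mathcal{T}(g)$. Then $q$ is a non-transversal intersection point of $\mathcal{T}(f)$ and $\mathcal{T}(g)$ if and only if there exists $l\in\mathbb{R}$ such that $(q_1,q_2,l)$ is a singular point of $\mathcal{T}(f\oplus w_3\odot g)$.
   Context: $\mathbb{K}$ is an algebraically closed field of characteristic $0$ with a rank-one non-archimedean valuation $val$ whose residue field has characteristic $0$. Tropical operations $\oplus=\min$, $\odot=+$, $w^i=\langle i,w\rangle$, all coefficients real; $\mathcal{T}(h)$ is the set where the minimum of the terms of $h$ is attained at least twice. $f\oplus w_3\odot g$ denotes the tropical polynomial $\bigoplus_{i\in A_1}p^1_i\odot w^{(i,0)}\oplus\bigoplus_{i\in A_2}p^2_i\odot w^{(i,1)}$ in $w=(w_1,w_2,w_3)$, with support $A_1\times\{0\}\cup A_2\times\{1\}\subset\mathbb{Z}^3$. For a tropical polynomial $h=\bigoplus_{k\in S}c_k\odot w^k$, a point $\overline q\in\mathcal{T}(h)$ is singular if there exist $H=\sum_{k\in S}a_kx^k$ over $\mathbb{K}$ with $val(a_k)=c_k$ and $b\in(\mathbb{K}^* )^3$ with $val(b)=\overline q$ such that $H(b)=0$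 and all partial derivatives of $H$ vanish at $b$. A point $q\in\mathcal{T}(f)\cap\mathcal{T}(g)$ is a non-transversal intersection point if there exist $F=\sum_{i\in A_1}a^1_ix^i$, $G=\sum_{i\in A_2}a^2_ix^i$ over $\mathbb{K}$ with $val(a^1_i)=p^1_i$, $val(a^2_i)=p^2_i$, and $b\in(\mathbb{K}^* )^2$ with $val(b)=q$, such that $F(b)=G(b)=0$ and the system $F_{x_1}(b)y_1+G_{x_1}(b)y_2=F_{x_2}(b)y_1+G_{x_2}(b)y_2=0$ has a solution $(y_1,y_2)\in(\mathbb{K}^* )^2$. *)

From HB Require Import structures.
From mathcomp Require Import all_boot all_order all_algebra.
From mathcomp Require Import reals.
Set Implicit Arguments. Unset Strict Implicit. Unset Printing Implicit Defensive.
Import Order.TTheory GRing.Theory Num.Theory.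
Local Open Scope ring_scope.

Section Defs.
Variables (R : realType) (K : closedFieldType).

(* val is a real-valued (rank one) valuation on K^*; its value at 0 is junk. *)
Definition valuation_ring (v : K -> R) : pred K := fun x => (x == 0) || (0 <= v x).
Definition valuation_maxideal (v : K -> R) : pred K := fun x => (x == 0) || (0 < v x).

(* residue field O/m has characteristic 0: n*1 is nonzero in O/m for all n>0 *)
Definition residue_char0 (v : K -> R) : Prop :=
  forall n : nat, (0 < n)%N -> n%:R \notin valuation_maxideal v.

Definition valued_field (v : K -> R) : Prop :=
  [/\ [pchar K] =i pred0,
      (forall x y, x != 0 -> y != 0 -> v (x * y) = v x + v y),
      (forall x y, x != 0 -> y != 0 -> x + y != 0 -> Num.min (v x) (v y) <= v (x + y)),
      (forall r : R, exists x, x != 0 /\ v x = r)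
    & residue_char0 v].

Definition trop_vanish (E : eqType) (W : Type) (pair : E -> W -> R)
  (S : seq E) (c : E -> R) (w : W) : Prop :=
  exists i j, [/\ i \in S, j \in S, i != j,
     c i + pair i w = c j + pair j w &
     forall k, k \in S -> c i + pair i w <= c k + pair k w].

Definition pair2 (i : int * int) (w : R * R) : R := i.1%:~R * w.1 + i.2%:~R * w.2.
Definition pair3 (k : int * int * int) (w : R * R * R) : R :=
  pair2 k.1 w.1 + k.2%:~R * w.2.

Definition ev2 (S : seq (int * int)) (a : int * int -> K) (x : K * K) : K :=
  \sum_(i <- S) a i * (x.1 ^ i.1 * x.2 ^ i.2).
Definition d2_1 (S : seq (int * int)) (a : int * int -> K) (x : K * K) : K :=
  \sum_(i <- S) a i * (i.1%:~R * (x.1 ^ (i.1 - 1) * x.2 ^ i.2)).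
Definition d2_2 (S : seq (int * int)) (a : int * int -> K) (x : K * K) : K :=
  \sum_(i <- S) a i * (i.2%:~R * (x.1 ^ i.1 * x.2 ^ (i.2 - 1))).

Definition ev3 (S : seq (int * int * int)) (a : int * int * int -> K) (x : K * K * K) : K :=
  \sum_(k <- S) a k * (x.1.1 ^ k.1.1 * x.1.2 ^ k.1.2 * x.2 ^ k.2).
Definition d3_1 (S : seq (int * int * int)) (a : int * int * int -> K) (x : K * K * K) : K :=
  \sum_(k <- S) a k * (k.1.1%:~R * (x.1.1 ^ (k.1.1 - 1) * x.1.2 ^ k.1.2 * x.2 ^ k.2)).
Definition d3_2 (S : seq (int * int * int)) (a : int * int * int -> K) (x : K * K * K) : K :=
  \sum_(k <- S) a k * (k.1.2%:~R * (x.1.1 ^ k.1.1 * x.1.2 ^ (k.1.2 - 1) * x.2 ^ k.2)).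
Definition d3_3 (S : seq (int * int * int)) (a : int * int * int -> K) (x : K * K * K) : K :=
  \sum_(k <- S) a k * (k.2%:~R * (x.1.1 ^ k.1.1 * x.1.2 ^ k.1.2 * x.2 ^ (k.2 - 1))).

Definition lifts (E : eqType) (v : K -> R) (S : seq E) (c : E -> R) (a : E -> K) : Prop :=
  forall k, k \in S -> a k != 0 /\ v (a k) = c k.

Definition trop_singular3 (v : K -> R) (S : seq (int * int * int))
  (c : int * int * int -> R) (q : R * R * R) : Prop :=
  trop_vanish pair3 S c q /\
  exists (a : int * int * int -> K) (b : K * K * K),
    [/\ lifts v S c a,
        [/\ b.1.1 != 0, b.1.2 != 0 & b.2 != 0],
        [/\ v b.1.1 = q.1.1, v b.1.2 = q.1.2 & v b.2 = q.2],
        ev3 S a b = 0 &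
        [/\ d3_1 S a b = 0, d3_2 S a b = 0 & d3_3 S a b = 0]].

Definition nontransversal (v : K -> R) (A1 A2 : seq (int * int))
  (p1 p2 : int * int -> R) (q : R * R) : Prop :=
  [/\ trop_vanish pair2 A1 p1 q, trop_vanish pair2 A2 p2 q &
  exists (a1 a2 : int * int -> K) (b : K * K),
    [/\ lifts v A1 p1 a1, lifts v A2 p2 a2,
        [/\ b.1 != 0, b.2 != 0, v b.1 = q.1 & v b.2 = q.2],
        ev2 A1 a1 b = 0 /\ ev2 A2 a2 b = 0 &
        exists y1 y2 : K, [/\ y1 != 0, y2 != 0,
          d2_1 A1 a1 b * y1 + d2_1 A2 a2 b * y2 = 0 &
          d2_2 A1 a1 b * y1 + d2_2 A2 a2 b * y2 = 0]]].

End Defs.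

(* ---------- f (+) w3 (.) g : the Cayley polynomial ---------- *)
Definition cayley_supp (A1 A2 : seq (int * int)) : seq (int * int * int) :=
  [seq (i, 0%:Z) | i <- A1] ++ [seq (i, 1%:Z) | i <- A2].
Definition cayley_coef (R : Type) (p1 p2 : int * int -> R) (k : int * int * int) : R :=
  if k.2 == 0%:Z then p1 k.1 else p2 k.1.

(* ZA1 + ZA2 = Z^2, where ZA is the lattice generated by the differences of A *)
Definition lattice_full (A1 A2 : seq (int * int)) : Prop :=
  forall v : int * int, exists (c1 c2 : int * int -> int * int -> int),
    v.1 = \sum_(i <- A1) \sum_(j <- A1) c1 i j * (i.1 - j.1)
        + \sum_(i <- A2) \sum_(j <- A2) c2 i j * (i.1 - j.1) /\
    v.2 = \sum_(i <- A1) \sum_(j <- A1) c1 i j * (i.2 - j.2)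
        + \sum_(i <- A2) \sum_(j <- A2) c2 i j * (i.2 - j.2).

From HB Require Import structures.
From mathcomp Require Import all_boot all_order all_algebra.
From mathcomp Require Import reals ring lra.
Import Order.TTheory GRing.Theory Num.Theory.
Local Open Scope ring_scope.

(* Cayley trick.  The lift of f (+) w3 (.) g is H = F + x3 G, so H = dH/dx3 = 0
   says F = G = 0, and dH/dx1 = dH/dx2 = 0 says that (1, x3) is in the kernel of
   the transposed Jacobian of (F, G); conversely a kernel vector (y1, y2) with
   y1 <> 0 gives the third coordinate x3 = y2 / y1.  Tropically, the minimum of
   the terms of f (+) w3 (.) g at (q, l) is min (f(q), g(q) + l), which is
   attained twice for every l once q lies on both T(f) and T(g). *)

Section CayleySupport.
Variables A1 A2 : seq (int * int).

Lemma cayley_suppP k :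
  k \in cayley_supp A1 A2 ->
  (exists2 i, i \in A1 & k = (i, 0%:Z)) \/ (exists2 i, i \in A2 & k = (i, 1%:Z)).
Proof.
by rewrite mem_cat => /orP[] /mapP[i iA ->]; [left | right]; exists i.
Qed.

Lemma mem_cayley_supp0 i : i \in A1 -> (i, 0%:Z) \in cayley_supp A1 A2.
Proof. by move=> iA; rewrite mem_cat map_f. Qed.

Lemma mem_cayley_supp1 i : i \in A2 -> (i, 1%:Z) \in cayley_supp A1 A2.
Proof. by move=> iA; rewrite mem_cat map_f ?orbT. Qed.

Lemma big_cayley_supp (M : zmodType) (F : int * int * int -> M) :
  \sum_(k <- cayley_supp A1 A2) F k =
  \sum_(i <- A1) F (i, 0%:Z) + \sum_(i <- A2) F (i, 1%:Z).
Proof. by rewrite big_cat !big_map. Qed.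

End CayleySupport.

Section CayleyTropical.
Variables (R : realType) (A1 A2 : seq (int * int)) (p1 p2 : int * int -> R).
Variables (q : R * R) (l : R).

Lemma cayley_term0 i :
  cayley_coef p1 p2 (i, 0%:Z) + pair3 (i, 0%:Z) (q.1, q.2, l) = p1 i + pair2 i q.
Proof. by rewrite /pair3 /cayley_coef /= mul0r addr0. Qed.

Lemma cayley_term1 i :
  cayley_coef p1 p2 (i, 1%:Z) + pair3 (i, 1%:Z) (q.1, q.2, l) = p2 i + pair2 i q + l.
Proof. by rewrite /pair3 /cayley_coef /= mul1r addrA. Qed.

Lemma trop_vanish_cayley :
  trop_vanish (@pair2 R) A1 p1 q -> trop_vanish (@pair2 R) A2 p2 q ->
  trop_vanish (@pair3 R) (cayley_supp A1 A2) (cayley_coef p1 p2) (q.1, q.2, l).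
Proof.
move=> [i [j [iA jA ij Eij min_i]]] [i' [j' [iA' jA' ij' Eij' min_i']]].
have [f_le | g_lt] := lerP (p1 i + pair2 i q) (p2 i' + pair2 i' q + l).
- exists (i, 0%:Z), (j, 0%:Z); split; rewrite ?mem_cayley_supp0 //.
  + by apply: contra ij => /eqP[->].
  + by rewrite !cayley_term0.
  move=> k /cayley_suppP[[k' kA ->] | [k' kA ->]].
    by rewrite !cayley_term0 min_i.
  by rewrite cayley_term0 cayley_term1; have := min_i' k' kA; lra.
- exists (i', 1%:Z), (j', 1%:Z); split; rewrite ?mem_cayley_supp1 //.
  + by apply: contra ij' => /eqP[->].
  + by rewrite !cayley_term1 Eij'.
  move=> k /cayley_suppP[[k' kA ->] | [k' kA ->]].
    by rewrite cayley_term0 cayley_term1; have := min_i k' kA; lra.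
  by rewrite !cayley_term1 lerD2r min_i'.
Qed.

End CayleyTropical.

Section CayleyLifts.
Variables (R : realType) (K : closedFieldType) (v : K -> R).
Variables (A1 A2 : seq (int * int)) (p1 p2 : int * int -> R).

Lemma lifts_cayley a1 a2 :
  lifts v A1 p1 a1 -> lifts v A2 p2 a2 ->
  lifts v (cayley_supp A1 A2) (cayley_coef p1 p2) (cayley_coef a1 a2).
Proof.
by move=> L1 L2 k /cayley_suppP[[i iA ->] | [i iA ->]]; [apply: L1 | apply: L2].
Qed.

Lemma lifts_cayley0 a :
  lifts v (cayley_supp A1 A2) (cayley_coef p1 p2) a ->
  lifts v A1 p1 (fun i => a (i, 0%:Z)).
Proof. by move=> L i iA; have := L _ (mem_cayley_supp0 A1 A2 i iA). Qed.

Lemma lifts_cayley1 a :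
  lifts v (cayley_supp A1 A2) (cayley_coef p1 p2) a ->
  lifts v A2 p2 (fun i => a (i, 1%:Z)).
Proof. by move=> L i iA; have := L _ (mem_cayley_supp1 A1 A2 i iA). Qed.

End CayleyLifts.

Section CayleyAlgebraic.
Variables (K : closedFieldType) (A1 A2 : seq (int * int)) (a : int * int * int -> K).
Variables (x1 x2 x3 : K).

Lemma ev3_cayley :
  ev3 (cayley_supp A1 A2) a (x1, x2, x3) =
  ev2 A1 (fun i => a (i, 0%:Z)) (x1, x2) + x3 * ev2 A2 (fun i => a (i, 1%:Z)) (x1, x2).
Proof.
rewrite /ev3 big_cayley_supp mulr_sumr; congr (_ + _); apply: eq_bigr => i _ /=.
  by rewrite expr0z mulr1.
by rewrite expr1z; ring.
Qed.

Lemma d3_1_cayley :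
  d3_1 (cayley_supp A1 A2) a (x1, x2, x3) =
  d2_1 A1 (fun i => a (i, 0%:Z)) (x1, x2) + x3 * d2_1 A2 (fun i => a (i, 1%:Z)) (x1, x2).
Proof.
rewrite /d3_1 big_cayley_supp mulr_sumr; congr (_ + _); apply: eq_bigr => i _ /=.
  by rewrite expr0z mulr1.
by rewrite expr1z; ring.
Qed.

Lemma d3_2_cayley :
  d3_2 (cayley_supp A1 A2) a (x1, x2, x3) =
  d2_2 A1 (fun i => a (i, 0%:Z)) (x1, x2) + x3 * d2_2 A2 (fun i => a (i, 1%:Z)) (x1, x2).
Proof.
rewrite /d3_2 big_cayley_supp mulr_sumr; congr (_ + _); apply: eq_bigr => i _ /=.
  by rewrite expr0z mulr1.
by rewrite expr1z; ring.
Qed.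

Lemma d3_3_cayley :
  d3_3 (cayley_supp A1 A2) a (x1, x2, x3) = ev2 A2 (fun i => a (i, 1%:Z)) (x1, x2).
Proof.
rewrite /d3_3 big_cayley_supp big1 ?add0r => [|i _]; last by rewrite mul0r mulr0.
by apply: eq_bigr => i _ /=; rewrite subrr expr0z mulr1 mul1r.
Qed.

End CayleyAlgebraic.

Lemma kernel_ratio (K : fieldType) (u w y1 y2 : K) :
  y1 != 0 -> u * y1 + w * y2 = 0 -> u + y2 / y1 * w = 0.
Proof. by move=> y1_neq0 uw0; apply: (mulIf y1_neq0); rewrite mul0r -uw0; field. Qed.

Theorem lemma5p2 (R : realType) (K : closedFieldType) (v : K -> R)
  (Hv : valued_field v)
  (A1 A2 : seq (int * int)) (uA1 : uniq A1) (uA2 : uniq A2)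
  (sA1 : (2 <= size A1)%N) (sA2 : (2 <= size A2)%N)
  (HZ : lattice_full A1 A2)
  (p1 p2 : int * int -> R) (q : R * R)
  (Hqf : trop_vanish (@pair2 R) A1 p1 q) (Hqg : trop_vanish (@pair2 R) A2 p2 q) :
  nontransversal v A1 A2 p1 p2 q <->
  exists l : R, trop_singular3 v (cayley_supp A1 A2) (cayley_coef p1 p2) (q.1, q.2, l).
Proof.
split.
- case=> _ _ [a1 [a2 [[b1 b2] [L1 L2 [/= nb1 nb2 vb1 vb2] [F0 G0]]]]].
  case=> y1 [y2 [ny1 ny2 D1 D2]].
  exists (v (y2 / y1)); split; first exact: trop_vanish_cayley.
  exists (cayley_coef a1 a2), (b1, b2, y2 / y1); split => //=.
  + exact: lifts_cayley.
  + by rewrite nb1 nb2 mulf_neq0 ?invr_eq0.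
  + by rewrite ev3_cayley /= F0 G0 mulr0 addr0.
  by rewrite d3_1_cayley d3_2_cayley d3_3_cayley /= !kernel_ratio.
- case=> l [_ [a [[[b1 b2] b3] [La /= [nb1 nb2 nb3] [vb1 vb2 _] H0 [D1 D2 D3]]]]].
  rewrite d3_3_cayley in D3; rewrite ev3_cayley D3 mulr0 addr0 in H0.
  split => //; exists (fun i => a (i, 0%:Z)), (fun i => a (i, 1%:Z)), (b1, b2); split.
  + exact: lifts_cayley0 La.
  + exact: lifts_cayley1 La.
  + by rewrite vb1 vb2.
  + by [].
  exists 1, b3; rewrite oner_neq0 nb3 !mulr1 ![_ * b3]mulrC.
  by rewrite -d3_1_cayley -d3_2_cayley.
Qed.
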